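(* Let $u_1\neq u_2$ be the roots of $B(u)$, $v_i=-A(u_i)=-q_1^2u_i-2q_1q_2$, and $w_i=v_i-\tfrac32(u_i^3-t_1u_i-t_3)$ for $i=1,2$. Put $$V_i=\tfrac13w_i^2-\frac{t_1t_2}{2}-\frac{3t_3^2}{4}-\tfrac32t_1t_3u_i-\tfrac34t_1^2u_i^2+t_2u_i^2+\tfrac32t_3u_i^3+\tfrac32t_1u_i^4-\tfrac34u_i^6 .$$ Then $(u_1,u_2,w_1,w_2)$ are canonical coordinates ($\{u_i,w_j\}=\delta_{ij}$, $\{u_1,u_2\}=\{w_1,w_2\}=0$), and the Hamiltonians take the St\''ackel form $$H_1=\frac{V_1-V_2}{u_1-u_2},\qquad H_2=\frac{u_2V_1-u_1V_2}{u_2-u_1}.$$ Equivalently, $w_i^2=\mathcal P(u_i)$ for $i=1,2$, where $$\mathcal P(u)=\frac94\Big(u^6-2t_1u^4-2t_3u^3+\big(t_1^2-\tfrac43t_2\big)u^2+2t_1t_3u+\tfrac23t_1t_2+t_3^2\Big)+3H_1u+3H_2 .$$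
   Context: $(q_1,q_2,p_1,p_2)$ carry the canonical bracket $\{q_i,p_j\}=\delta_{ij}$, $\{q_1,q_2\}=\{p_1,p_2\}=0$; $t_1,t_2,t_3$ are constants, $q_1\neq0$; $$B(u)=u^2-\frac{p_2-2q_2}{2q_1}u+\frac{q_1^2}{6}-\frac{t_1}{2}-\frac{p_1}{2q_1}+\frac{p_2^2/4-q_2^2+t_2}{2q_1^2},\qquad A(u)=q_1^2u+2q_1q_2,$$ $$H_1=\tfrac12p_1p_2-\frac{q_2}{4q_1}p_2^2+q_1^3q_2+\frac{q_2^3}{q_1}-t_1q_1q_2-\frac{t_2q_2}{q_1}-t_3q_1^2,$$ $$H_2=-\Big(\frac{p_2^2}{8q_1}+\frac{3t_2-3t_1q_1^2+q_1^4-3q_2^2}{6q_1}\Big)^2-\frac{t_1t_2}{2}+\frac14p_1^2-2t_3q_1q_2+\frac43q_1^2q_2^2 .$$ *)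

From Stdlib Require Import Reals.
From Coquelicot Require Import Coquelicot.
Open Scope R_scope.

(* A phase-space function of (q1, q2, p1, p2). *)
Definition fun4 := R -> R -> R -> R -> R.

Definition dq1 (f : fun4) a b c d := Derive (fun z => f z b c d) a.
Definition dq2 (f : fun4) a b c d := Derive (fun z => f a z c d) b.
Definition dp1 (f : fun4) a b c d := Derive (fun z => f a b z d) c.
Definition dp2 (f : fun4) a b c d := Derive (fun z => f a b c z) d.

Definition has_partials (f : fun4) a b c d : Prop :=
  ex_derive (fun z => f z b c d) a /\ ex_derive (fun z => f a z c d) b /\
  ex_derive (fun z => f a b z d) c /\ ex_derive (fun z => f a b c z) d.

Definition pb (f g : fun4) a b c d : R :=
  dq1 f a b c d * dp1 g a b c d - dp1 f a b c d * dq1 g a b c d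
  + dq2 f a b c d * dp2 g a b c d - dp2 f a b c d * dq2 g a b c d.

Definition open4 (U : R -> R -> R -> R -> Prop) : Prop :=
  forall a b c d, U a b c d -> exists e, 0 < e /\
    forall a' b' c' d', Rabs (a' - a) < e -> Rabs (b' - b) < e ->
      Rabs (c' - c) < e -> Rabs (d' - d) < e -> U a' b' c' d'.

Section Sys.
Variables t1 t2 t3 : R.

Definition Bpoly (q1 q2 p1 p2 u : R) : R :=
  u ^ 2 - (p2 - 2 * q2) / (2 * q1) * u + q1 ^ 2 / 6 - t1 / 2 - p1 / (2 * q1)
  + (p2 ^ 2 / 4 - q2 ^ 2 + t2) / (2 * q1 ^ 2).

Definition Apoly (q1 q2 u : R) : R := q1 ^ 2 * u + 2 * q1 * q2.

Definition H1 (q1 q2 p1 p2 : R) : R :=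
  / 2 * p1 * p2 - q2 / (4 * q1) * p2 ^ 2 + q1 ^ 3 * q2 + q2 ^ 3 / q1
  - t1 * q1 * q2 - t2 * q2 / q1 - t3 * q1 ^ 2.

Definition H2 (q1 q2 p1 p2 : R) : R :=
  - (p2 ^ 2 / (8 * q1) + (3 * t2 - 3 * t1 * q1 ^ 2 + q1 ^ 4 - 3 * q2 ^ 2) / (6 * q1)) ^ 2
  - t1 * t2 / 2 + / 4 * p1 ^ 2 - 2 * t3 * q1 * q2 + 4 / 3 * q1 ^ 2 * q2 ^ 2.

Definition wval (q1 q2 u : R) : R :=
  - Apoly q1 q2 u - 3 / 2 * (u ^ 3 - t1 * u - t3).

Definition wfun (u : fun4) : fun4 :=
  fun a b c d => wval a b (u a b c d).

Definition Vval (u w : R) : R :=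
  / 3 * w ^ 2 - t1 * t2 / 2 - 3 * t3 ^ 2 / 4 - 3 / 2 * t1 * t3 * u
  - 3 / 4 * t1 ^ 2 * u ^ 2 + t2 * u ^ 2 + 3 / 2 * t3 * u ^ 3
  + 3 / 2 * t1 * u ^ 4 - 3 / 4 * u ^ 6.

Definition Ppoly (h1 h2 u : R) : R :=
  9 / 4 * (u ^ 6 - 2 * t1 * u ^ 4 - 2 * t3 * u ^ 3 + (t1 ^ 2 - 4 / 3 * t2) * u ^ 2
           + 2 * t1 * t3 * u + 2 / 3 * t1 * t2 + t3 ^ 2)
  + 3 * h1 * u + 3 * h2.
End Sys.

(* The roots u_i of B are given only implicitly, so their partial derivatives come from
   implicit differentiation of B(u) = 0, and those of w_i follow by the chain rule.
   By Vieta, p1 and p2 are rational in q1, q2 and the roots; eliminating the momenta turns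
   every bracket and both Staeckel relations into rational identities in (q1, q2, u1, u2)
   whose denominators are powers of q1 and of u1 - u2. *)

From Stdlib Require Import Reals Lra.
From Coquelicot Require Import Coquelicot.
Open Scope R_scope.

Lemma open4_locally (U P : R -> R -> R -> R -> Prop) a b c d :
  open4 U -> (forall a b c d, U a b c d -> P a b c d) -> U a b c d ->
  locally a (fun z => P z b c d) /\ locally b (fun z => P a z c d) /\
  locally c (fun z => P a b z d) /\ locally d (fun z => P a b c z).
Proof.
  intros HU HP Habcd. destruct (HU a b c d Habcd) as [e [He Hball]].
  assert (Hdiag : forall x, Rabs (x - x) < e)
    by (intros; rewrite Rminus_diag, Rabs_R0; exact He).
  repeat split; exists (mkposreal e He); intros y Hy; apply HP, Hball; auto.
Qed.

Lemma quadratic_vieta s r x1 x2 :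
  x1 ^ 2 - s * x1 + r = 0 -> x2 ^ 2 - s * x2 + r = 0 -> x1 <> x2 ->
  s = x1 + x2 /\ r = x1 * x2.
Proof.
  intros H1 H2 Hne.
  assert (Hs : s = x1 + x2).
  { assert (E : (x1 - x2) * (x1 + x2 - s) = 0).
    { replace ((x1 - x2) * (x1 + x2 - s))
        with ((x1 ^ 2 - s * x1 + r) - (x2 ^ 2 - s * x2 + r)) by ring.
      rewrite H1, H2. ring. }
    apply Rmult_integral in E as [E | E]; [exfalso; apply Hne|]; lra. }
  split; [exact Hs|]. subst s. lra.
Qed.

Lemma Derive_quadratic_root (f s r : R -> R) x ds dr :
  locally x (fun z => f z ^ 2 - s z * f z + r z = 0) ->
  ex_derive f x -> is_derive s x ds -> is_derive r x dr -> 2 * f x - s x <> 0 ->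
  Derive f x = (f x * ds - dr) / (2 * f x - s x).
Proof.
  intros Hloc Hf Hs Hr Hk.
  assert (D0 : is_derive (fun z => f z ^ 2 - s z * f z + r z) x 0).
  { apply is_derive_ext_loc with (fun _ => 0).
    - eapply filter_imp; [|exact Hloc]. simpl. auto.
    - auto_derive; auto. }
  assert (D1 : is_derive (fun z => f z ^ 2 - s z * f z + r z) x
                 (2 * f x * Derive f x - (ds * f x + s x * Derive f x) + dr)).
  { rewrite <- (is_derive_unique _ _ _ Hs), <- (is_derive_unique _ _ _ Hr).
    auto_derive.
    - repeat split; first [exact Hf | eexists; exact Hs | eexists; exact Hr].
    - (* [ring] would treat the eta-expanded [Derive (fun z => f z) x] as a new atom. *)
      change (fun z => f z) with f; change (fun z => s z) with s;
        change (fun z => r z) with r.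
      ring. }
  pose proof (is_derive_unique _ _ _ D0) as E0.
  rewrite (is_derive_unique _ _ _ D1) in E0.
  apply (Rmult_eq_reg_r (2 * f x - s x)); [|exact Hk].
  unfold Rdiv. rewrite Rmult_assoc, Rinv_l, Rmult_1_r by exact Hk. lra.
Qed.

Section RootCoordinates.
Variables t1 t2 : R.

Definition Bsum (q1 q2 p1 p2 : R) : R := (p2 - 2 * q2) / (2 * q1).
Definition Bprod (q1 q2 p1 p2 : R) : R :=
  q1 ^ 2 / 6 - t1 / 2 - p1 / (2 * q1) + (p2 ^ 2 / 4 - q2 ^ 2 + t2) / (2 * q1 ^ 2).

Lemma Bpoly_sum_prod q1 q2 p1 p2 u :
  Bpoly t1 t2 q1 q2 p1 p2 u = u ^ 2 - Bsum q1 q2 p1 p2 * u + Bprod q1 q2 p1 p2.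
Proof. unfold Bpoly, Bsum, Bprod. ring. Qed.

Lemma momenta_of_roots q1 q2 p1 p2 x1 x2 : q1 <> 0 ->
  Bsum q1 q2 p1 p2 = x1 + x2 -> Bprod q1 q2 p1 p2 = x1 * x2 ->
  p1 = 2 * q1 * (q1 ^ 2 / 6 - t1 / 2 + (p2 ^ 2 / 4 - q2 ^ 2 + t2) / (2 * q1 ^ 2)
                 - x1 * x2) /\
  p2 = 2 * q1 * (x1 + x2) + 2 * q2.
Proof.
  unfold Bsum, Bprod. intros Hq1 Hs Hp. split.
  - rewrite <- Hp. field. exact Hq1.
  - rewrite <- Hs. field. exact Hq1.
Qed.

Variable U : R -> R -> R -> R -> Prop.
Variable u : fun4.
Hypothesis HU : open4 U.
Hypothesis Hroot :
  forall a b c d, U a b c d -> a <> 0 /\ Bpoly t1 t2 a b c d (u a b c d) = 0.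

Lemma root_locally a b c d : U a b c d ->
  let P a b c d := (u a b c d ^ 2 - Bsum a b c d * u a b c d + Bprod a b c d = 0) in
  locally a (fun z => P z b c d) /\ locally b (fun z => P a z c d) /\
  locally c (fun z => P a b z d) /\ locally d (fun z => P a b c z).
Proof.
  intros Habcd P. apply (open4_locally U); [exact HU| |exact Habcd].
  intros a' b' c' d' H. unfold P. rewrite <- Bpoly_sum_prod. apply Hroot, H.
Qed.

Ltac nonzero := repeat apply Rmult_integral_contrapositive_currified; auto; lra.

Ltac implicit_root_derivative loc f s r :=
  unfold dq1, dq2, dp1, dp2;
  erewrite (Derive_quadratic_root f s r);
  [ | exact loc | assumption
    | unfold Bsum; auto_derive; [repeat split; nonzero | reflexivity]
    | unfold Bprod; auto_derive; [repeat split; nonzero | reflexivity]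
    | assumption ];
  field; split; assumption.

Lemma root_partials a b c d : U a b c d -> has_partials u a b c d ->
  2 * u a b c d - Bsum a b c d <> 0 ->
  let K := 2 * u a b c d - Bsum a b c d in
  dq1 u a b c d =
    - ((d - 2 * b) / (2 * a ^ 2) * u a b c d
       + a / 3 + c / (2 * a ^ 2) - (d ^ 2 / 4 - b ^ 2 + t2) / a ^ 3) / K /\
  dq2 u a b c d = - (u a b c d / a - b / a ^ 2) / K /\
  dp1 u a b c d = / (2 * a) / K /\
  dp2 u a b c d = (u a b c d / (2 * a) - d / (4 * a ^ 2)) / K.
Proof.
  intros Habcd [Da [Db [Dc Dd]]] Hk K. unfold K.
  destruct (Hroot a b c d Habcd) as [Ha _].
  destruct (root_locally a b c d Habcd) as [La [Lb [Lc Ld]]].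
  repeat split.
  - implicit_root_derivative La (fun z => u z b c d)
      (fun z => Bsum z b c d) (fun z => Bprod z b c d).
  - implicit_root_derivative Lb (fun z => u a z c d)
      (fun z => Bsum a z c d) (fun z => Bprod a z c d).
  - implicit_root_derivative Lc (fun z => u a b z d)
      (fun z => Bsum a b z d) (fun z => Bprod a b z d).
  - implicit_root_derivative Ld (fun z => u a b c z)
      (fun z => Bsum a b c z) (fun z => Bprod a b c z).
Qed.

End RootCoordinates.

Section ConjugateMomentum.
Variables t1 t3 : R.
Variable u : fun4.

Definition dwval_du (q1 u : R) : R := - q1 ^ 2 - 3 / 2 * (3 * u ^ 2 - t1).

Lemma wfun_partials a b c d : has_partials u a b c d ->
  let k := dwval_du a (u a b c d) in
  dq1 (wfun t1 t3 u) a b c d =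
    - (2 * a * u a b c d + 2 * b) + k * dq1 u a b c d /\
  dq2 (wfun t1 t3 u) a b c d = - (2 * a) + k * dq2 u a b c d /\
  dp1 (wfun t1 t3 u) a b c d = k * dp1 u a b c d /\
  dp2 (wfun t1 t3 u) a b c d = k * dp2 u a b c d.
Proof.
  intros [Da [Db [Dc Dd]]] k.
  unfold k, dq1, dq2, dp1, dp2, wfun, wval, Apoly, dwval_du.
  repeat split; apply is_derive_unique; auto_derive; auto; ring.
Qed.

End ConjugateMomentum.

Theorem mainTheorem9 (t1 t2 t3 : R) (U : R -> R -> R -> R -> Prop) (u1 u2 : fun4) :
  open4 U ->
  (forall a b c d, U a b c d ->
     a <> 0 /\ Bpoly t1 t2 a b c d (u1 a b c d) = 0 /\
     Bpoly t1 t2 a b c d (u2 a b c d) = 0 /\ u1 a b c d <> u2 a b c d) ->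
  forall q1 q2 p1 p2, U q1 q2 p1 p2 ->
  has_partials u1 q1 q2 p1 p2 -> has_partials u2 q1 q2 p1 p2 ->
  let w1 := wfun t1 t3 u1 in
  let w2 := wfun t1 t3 u2 in
  let x1 := u1 q1 q2 p1 p2 in
  let x2 := u2 q1 q2 p1 p2 in
  let y1 := w1 q1 q2 p1 p2 in
  let y2 := w2 q1 q2 p1 p2 in
  let V1 := Vval t1 t2 t3 x1 y1 in
  let V2 := Vval t1 t2 t3 x2 y2 in
  let h1 := H1 t1 t2 t3 q1 q2 p1 p2 in
  let h2 := H2 t1 t2 t3 q1 q2 p1 p2 in
  pb u1 w1 q1 q2 p1 p2 = 1 /\ pb u1 w2 q1 q2 p1 p2 = 0 /\
  pb u2 w1 q1 q2 p1 p2 = 0 /\ pb u2 w2 q1 q2 p1 p2 = 1 /\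
  pb u1 u2 q1 q2 p1 p2 = 0 /\ pb w1 w2 q1 q2 p1 p2 = 0 /\
  h1 = (V1 - V2) / (x1 - x2) /\
  h2 = (x2 * V1 - x1 * V2) / (x2 - x1) /\
  y1 ^ 2 = Ppoly t1 t2 t3 h1 h2 x1 /\
  y2 ^ 2 = Ppoly t1 t2 t3 h1 h2 x2.
Proof.
  intros HU Hroots q1 q2 p1 p2 Hq Du1 Du2. cbv zeta.
  assert (Hroot1 : forall a b c d, U a b c d ->
                    a <> 0 /\ Bpoly t1 t2 a b c d (u1 a b c d) = 0)
    by (intros a b c d H; apply Hroots in H; tauto).
  assert (Hroot2 : forall a b c d, U a b c d ->
                    a <> 0 /\ Bpoly t1 t2 a b c d (u2 a b c d) = 0)
    by (intros a b c d H; apply Hroots in H; tauto).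
  destruct (Hroots _ _ _ _ Hq) as [Hq1 [B1 [B2 Hne]]].
  rewrite !Bpoly_sum_prod in B1, B2.
  destruct (quadratic_vieta _ _ _ _ B1 B2 Hne) as [Hsum Hprod].
  assert (K1 : 2 * u1 q1 q2 p1 p2 - Bsum q1 q2 p1 p2 <> 0) by (rewrite Hsum; lra).
  assert (K2 : 2 * u2 q1 q2 p1 p2 - Bsum q1 q2 p1 p2 <> 0) by (rewrite Hsum; lra).
  unfold pb.
  destruct (wfun_partials t1 t3 u1 q1 q2 p1 p2 Du1) as [-> [-> [-> ->]]].
  destruct (wfun_partials t1 t3 u2 q1 q2 p1 p2 Du2) as [-> [-> [-> ->]]].
  destruct (root_partials t1 t2 U u1 HU Hroot1 _ _ _ _ Hq Du1 K1) as [-> [-> [-> ->]]].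
  destruct (root_partials t1 t2 U u2 HU Hroot2 _ _ _ _ Hq Du2 K2) as [-> [-> [-> ->]]].
  rewrite Hsum.
  destruct (momenta_of_roots t1 t2 _ _ _ _ _ _ Hq1 Hsum Hprod) as [Hp1 Hp2].
  unfold wfun, wval, Apoly, dwval_du, H1, H2, Vval, Ppoly.
  set (x1 := u1 q1 q2 p1 p2) in *. set (x2 := u2 q1 q2 p1 p2) in *.
  clearbody x1 x2. clear - Hq1 Hne Hp1 Hp2. subst p1 p2.
  repeat split; field; repeat split; auto; lra.
Qed.
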